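(* Let $\pi:E\to\mathbb{R}^k$ be a fiber bundle, $L:J^1\pi\to\mathbb{R}$ a Lagrangian and ${\bf\Gamma}=(\Gamma_1,\dots,\Gamma_k)$ an integrable SOPDE on $J^1\pi$. Then $$\sum_{\alpha=1}^k\mathcal{L}_{\Gamma_\alpha}\Theta^\alpha_L=dL$$ if and only if $$\Gamma_\alpha\Big(\frac{\partial L}{\partial v^i_\alpha}\Big)-\frac{\partial L}{\partial q^i}=0,\qquad i=1,\dots,n.$$
   Context: $E$ is $(n+k)$-dimensional with adapted coordinates $(x^\alpha,q^i)$; $J^1\pi$ has induced coordinates $(x^\alpha,q^i,v^i_\alpha)$; summation over repeated indices. The Poincaré–Cartan $1$-forms are $\Theta^\alpha_L=L\,dx^\alpha+dL\circ S^\alpha$, where $S^\alpha$ is the canonical $(1,1)$-tensor field on $J^1\pi$ associated with $dx^\alpha$, locally $S^\alpha=(dq^i-v^i_\beta dx^\beta)\otimes\partial/\partial v^i_\alpha$; hence locally $\Theta^\alpha_L=\frac{\partial L}{\partial v^i_\alpha}(dq^i-v^i_\beta dx^\beta)+L\,dx^\alpha$. A SOPDE is a $k$-tuple of vector fields on $J^1\pi$ of the local form $\Gamma_\alpha=\partial/\partial x^\alpha+v^i_\alpha\partial/\partial q^i+\Gamma^i_{\alpha\beta}\partial/\partial v^i_\beta$ (equivalently $dx^\alpha(\Gamma_\beta)=\delta^\alpha_\beta$, $(dq^i-v^i_\gamma dx^\gamma)(\Gamma_\beta)=0$). Integrable means there is an integral section (a map $\psi:U\subset\mathbb{R}^k\to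 J^1\pi$ with $\psi_*(\partial/\partial x^\alpha)=\Gamma_\alpha\circ\psi$) through every point; the paper assumes throughout that integrable SOPDEs satisfy $[\Gamma_\alpha,\Gamma_\beta]=0$, equivalently $\Gamma^i_{\alpha\beta}=\Gamma^i_{\beta\alpha}$ and $\Gamma_\alpha(\Gamma^i_{\beta\gamma})=\Gamma_\beta(\Gamma^i_{\alpha\gamma})$. *)

(* Local (adapted-coordinate) model of J^1 pi. *)
From HB Require Import structures.
From mathcomp Require Import all_boot all_order all_algebra.
From mathcomp Require Import all_classical all_reals.
From mathcomp Require Import topology normedtype derive.
Set Implicit Arguments. Unset Strict Implicit. Unset Printing Implicit Defensive.
Import Order.TTheory GRing.Theory Num.Theory.
Import numFieldNormedType.Exports.
Local Open Scope classical_set_scope.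
Local Open Scope ring_scope.

Section J1.
Variables (R : realType) (k n : nat).

(* A point of J^1 pi in adapted coordinates (x^alpha, q^i, v^i_alpha):
   p.1 : 'rV_k  holds x,  p.2.1 : 'rV_n holds q,  p.2.2 : 'M_(n,k) holds v
   (v^i_alpha = p.2.2 i alpha).  Tangent vectors are elements of the same space. *)
Definition J1 := ('rV[R]_k * ('rV[R]_n * 'M[R]_(n, k)))%type.

Definition xc (p : J1) (a : 'I_k) : R := p.1 0 a.
Definition qc (p : J1) (i : 'I_n) : R := p.2.1 0 i.
Definition vc (p : J1) (i : 'I_n) (a : 'I_k) : R := p.2.2 i a.

Definition e_x (a : 'I_k) : J1 := (delta_mx 0 a, (0, 0)).
Definition e_q (i : 'I_n) : J1 := (0, (delta_mx 0 i, 0)).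
Definition e_v (i : 'I_n) (a : 'I_k) : J1 := (0, (0, delta_mx i a)).

Fixpoint iterD (vs : seq J1) (f : J1 -> R) : J1 -> R :=
  if vs is v :: vs' then fun p => 'D_v (iterD vs' f) p else f.
Definition smooth_on (D : set J1) (f : J1 -> R) : Prop :=
  forall (vs : seq J1) (p : J1), D p -> differentiable (iterD vs f) p.

Definition smooth_vf (D : set J1) (X : J1 -> J1) : Prop :=
  (forall a, smooth_on D (fun p => xc (X p) a)) /\
  (forall i, smooth_on D (fun p => qc (X p) i)) /\
  (forall i a, smooth_on D (fun p => vc (X p) i a)).

Definition vfapp (X : J1 -> J1) (f : J1 -> R) (p : J1) : R := 'D_(X p) f p.

Definition lie_bracket (X Y : J1 -> J1) (p : J1) : J1 :=
  'D_(X p) Y p - 'D_(Y p) X p.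

Definition dF (f : J1 -> R) (p : J1) (w : J1) : R := 'D_w f p.
Definition dx (a : 'I_k) (p : J1) (w : J1) : R := xc w a.

Definition S (a : 'I_k) (p : J1) (w : J1) : J1 :=
  \sum_(i < n) (qc w i - \sum_(b < k) vc p i b * xc w b) *: e_v i a.

Definition Theta (L : J1 -> R) (a : 'I_k) (p : J1) (w : J1) : R :=
  L p * dx a p w + dF L p (S a p w).

(* Lie derivative of a 1-form along a vector field, coordinate formula
   (L_X omega)_p(w) = X_p(omega(w)) + omega_p(D_w X)  (w extended as a constant field) *)
Definition lie1 (X : J1 -> J1) (om : J1 -> J1 -> R) (p : J1) (w : J1) : R :=
  'D_(X p) (fun p' => om p' w) p + om p ('D_w X p).

Definition is_SOPDE (D : set J1) (G : 'I_k -> J1 -> J1) : Prop :=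
  (forall b, smooth_vf D (G b)) /\
  forall b p, D p ->
    (forall a, xc (G b p) a = (a == b)%:R) /\
    (forall i, qc (G b p) i - \sum_(c < k) vc p i c * xc (G b p) c = 0).

Definition integral_section_through (D : set J1) (G : 'I_k -> J1 -> J1)
    (U : set 'rV[R]_k) (psi : 'rV[R]_k -> J1) (p : J1) : Prop :=
  open U /\ (exists2 y0, U y0 & psi y0 = p) /\
  forall y, U y -> D (psi y) /\ differentiable psi y /\
    forall a : 'I_k, 'D_(delta_mx 0 a) psi y = G a (psi y).

(* integrable SOPDE: integral sections through every point, together with the
   paper's standing assumption [Gamma_a, Gamma_b] = 0 *)
Definition integrable_SOPDE (D : set J1) (G : 'I_k -> J1 -> J1) : Prop :=
  is_SOPDE D G /\
  (forall p, D p -> exists U psi, integral_section_through D G U psi p) /\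
  (forall a b p, D p -> lie_bracket (G a) (G b) p = 0).

End J1.

From HB Require Import structures.
From mathcomp Require Import all_boot all_order all_algebra.
From mathcomp Require Import all_classical all_reals.
From mathcomp Require Import topology normedtype derive.
From mathcomp Require Import ring.
Import Order.TTheory GRing.Theory Num.Theory.
Import numFieldNormedType.Exports.
Local Open Scope classical_set_scope.
Local Open Scope ring_scope.

(* With the contact forms theta^i = dq^i - v^i_b dx^b, a coordinate computation gives
     sum_a L_{Gamma_a} Theta^a_L = dL + sum_i (sum_a Gamma_a(dL/dv^i_a) - dL/dq^i) theta^i.
   The second-order conditions make the dx- and most of the dq-terms cancel, and the
   dv-terms cancel because [Gamma_a, Gamma_b] = 0 forces Gamma^i_{ab} = Gamma^i_{ba}.
   As theta^i(d/dq^j) = delta^i_j, the 1-form on the right vanishes iff all its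
   coefficients do. *)

Lemma fst_sum (U V : nmodType) I r (P : pred I) (F : I -> U * V) :
  (\sum_(i <- r | P i) F i).1 = \sum_(i <- r | P i) (F i).1.
Proof. exact: big_morph. Qed.

Lemma snd_sum (U V : nmodType) I r (P : pred I) (F : I -> U * V) :
  (\sum_(i <- r | P i) F i).2 = \sum_(i <- r | P i) (F i).2.
Proof. exact: big_morph. Qed.

Section directional_derivative.
Context {R : realType}.

Lemma derive_linear_increment {V W : normedModType R} {f : V -> W} {c v : V} {d : W} :
  (forall h : R, f (h *: v + c) - f c = h *: d) -> derivable f c v /\ 'D_v f c = d.
Proof.
move=> hf.
have H : (fun h : R => h^-1 *: ((f \o shift c) (h *: v) - f c)) @ 0^' --> d.
  apply: cvg_near_cst; near=> h.
  rewrite /= hf scalerA mulVf ?scale1r //.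
  by near: h; exact: nbhs_dnbhs_neq.
by split; [apply/cvg_ex; exists d | apply: cvg_lim H].
Unshelve. all: by end_near. Qed.

Lemma derive_pair {U V W : normedModType R} {f : U -> V} {g : U -> W} {p u : U} :
  derivable f p u -> derivable g p u ->
  derivable (fun x => (f x, g x)) p u /\
  'D_u (fun x => (f x, g x)) p = ('D_u f p, 'D_u g p).
Proof.
move=> df dg.
have H : (fun h : R => h^-1 *: (((fun x => (f x, g x)) \o shift p) (h *: u) - (f p, g p)))
   @ 0^' --> ('D_u f p, 'D_u g p) by exact: cvg_pair df dg.
by split; [apply/cvg_ex; eexists; exact: H | apply: cvg_lim H].
Qed.

End directional_derivative.

(* dL(sum_a w^a Gamma_a - w) in coordinates: it has no dx-part, and the symmetry of
   Gam makes the two kinds of dv-terms agree. *)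
Lemma sum_derive_SOPDE_sub_coord {R : comPzRingType} {k n : nat}
    (Dx : 'I_k -> R) (Dq : 'I_n -> R) (Dv v wv : 'I_n -> 'I_k -> R)
    (Gam : 'I_n -> 'I_k -> 'I_k -> R) (wx : 'I_k -> R) (wq : 'I_n -> R) :
  (forall i a b, Gam i a b = Gam i b a) ->
  \sum_(a < k) (Dx a + \sum_(i < n) v i a * Dq i
                + \sum_(i < n) \sum_(b < k) Gam i a b * Dv i b) * wx a
  - (\sum_(a < k) wx a * Dx a + \sum_(i < n) wq i * Dq i
     + \sum_(i < n) \sum_(a < k) wv i a * Dv i a)
  = - \sum_(i < n) (wq i - \sum_(b < k) v i b * wx b) * Dq i
    - \sum_(a < k) \sum_(i < n) (wv i a - \sum_(b < k) Gam i a b * wx b) * Dv i a.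
Proof.
move=> Gam_sym.
have q_terms : \sum_(a < k) (\sum_(i < n) v i a * Dq i) * wx a
    = \sum_(i < n) (\sum_(b < k) v i b * wx b) * Dq i.
  under eq_bigr do rewrite mulr_suml.
  rewrite exchange_big; apply: eq_bigr => i _; rewrite mulr_suml.
  by apply: eq_bigr => a _; rewrite mulrAC.
have v_terms : \sum_(a < k) (\sum_(i < n) \sum_(b < k) Gam i a b * Dv i b) * wx a
    = \sum_(a < k) \sum_(i < n) (\sum_(b < k) Gam i a b * wx b) * Dv i a.
  under eq_bigr do rewrite mulr_suml; under eq_bigr do under eq_bigr do rewrite mulr_suml.
  rewrite exchange_big; under eq_bigr do rewrite exchange_big; rewrite exchange_big.
  apply: eq_bigr => b _; apply: eq_bigr => i _; rewrite mulr_suml.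
  by apply: eq_bigr => a _; rewrite Gam_sym mulrAC.
under eq_bigr do rewrite !mulrDl.
rewrite !big_split /= q_terms v_terms [\sum_(i < n) \sum_(a < k) _]exchange_big /=.
under [X in X + _ + _ - _ = _]eq_bigr do rewrite mulrC.
under [X in _ = - X - _]eq_bigr do rewrite mulrBl.
under [X in _ = _ - X]eq_bigr do (under eq_bigr do rewrite mulrBl; rewrite sumrB).
by rewrite !sumrB; ring.
Qed.

Lemma sum_lie_Theta_coord {R : comPzRingType} {k n : nat} (h : 'I_k -> R) (d : R)
    (th Dq : 'I_n -> R) (M c Dv : 'I_n -> 'I_k -> R) :
  \sum_(a < k) h a - d
    = - \sum_(i < n) th i * Dq i - \sum_(a < k) \sum_(i < n) c i a * Dv i a ->
  \sum_(a < k) (h a + \sum_(i < n) (th i * M i a + c i a * Dv i a))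
    = d + \sum_(i < n) th i * (\sum_(a < k) M i a - Dq i).
Proof.
move=> hd; apply/eqP; rewrite addrC -subr_eq; apply/eqP.
rewrite big_split /= addrAC hd.
under [X in _ + X = _]eq_bigr do rewrite big_split /=.
under [X in _ = X]eq_bigr do rewrite mulrBr mulr_sumr.
by rewrite big_split sumrB [X in _ = X - _]exchange_big /=; ring.
Qed.

Section J1_coordinates.
Context {R : realType} {k n : nat}.
Local Notation J := (J1 R k n).

Lemma J1_decomposition (z : J) :
  z = \sum_(a < k) xc z a *: e_x R n a + \sum_(i < n) qc z i *: e_q R k i
    + \sum_(i < n) \sum_(a < k) vc z i a *: e_v R i a.
Proof.
have sumZ0 (I : finType) (T : lmodType R) (c : I -> R) : \sum_i c i *: (0 : T) = 0.
  by rewrite big1 // => i _; rewrite scaler0.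
case: z => x [q v]; rewrite /xc /qc /vc /e_x /e_q /e_v /= pair_big.
apply: injective_projections; last apply: injective_projections;
  rewrite /= !(fst_sum, snd_sum) /= !sumZ0 ?add0r ?addr0.
- by rewrite {1}[x]matrix_sum_delta big_ord1; apply: eq_bigr => j _; rewrite (ord1 0).
- by rewrite {1}[q]matrix_sum_delta big_ord1; apply: eq_bigr => j _; rewrite (ord1 0).
- by rewrite {1}[v]matrix_sum_delta pair_big.
Qed.

Lemma derive_coordE (f : J -> R) (p u : J) : differentiable f p ->
  'D_u f p = \sum_(a < k) xc u a * 'D_(e_x R n a) f p
           + \sum_(i < n) qc u i * 'D_(e_q R k i) f p
           + \sum_(i < n) \sum_(a < k) vc u i a * 'D_(e_v R i a) f p.
Proof.
move=> df; rewrite deriveE // {1}(J1_decomposition u) !linearD !linear_sum.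
congr (_ + _ + _); apply: eq_bigr => i _; rewrite ?linear_sum.
- by rewrite linearZ deriveE.
- by rewrite linearZ deriveE.
- by apply: eq_bigr => a _; rewrite linearZ deriveE.
Qed.

Lemma derive_vc (u p : J) i a : 'D_u (fun q : J => vc q i a) p = vc u i a.
Proof.
apply: (proj2 (derive_linear_increment _)) => h.
by rewrite /vc /= !mxE addrK.
Qed.

Lemma derive_vf_coord {X : J -> J} {p u : J} :
  (forall a, derivable (fun q => xc (X q) a) p u) ->
  (forall i, derivable (fun q => qc (X q) i) p u) ->
  (forall i a, derivable (fun q => vc (X q) i a) p u) ->
  [/\ forall a, xc ('D_u X p) a = 'D_u (fun q => xc (X q) a) p,
      forall i, qc ('D_u X p) i = 'D_u (fun q => qc (X q) i) p &
      forall i a, vc ('D_u X p) i a = 'D_u (fun q => vc (X q) i a) p].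
Proof.
move=> dx dq dv.
have dX1 : derivable (fun q => (X q).1) p u.
  by apply/derivable_mxP => i a; rewrite (ord1 i); exact: dx.
have dX21 : derivable (fun q => (X q).2.1) p u.
  by apply/derivable_mxP => i j; rewrite (ord1 i); exact: dq.
have dX22 : derivable (fun q => (X q).2.2) p u by apply/derivable_mxP.
have [dX2 DX2] := derive_pair dX21 dX22.
have [_ DX] := derive_pair dX1 dX2.
have -> : X = (fun q => ((X q).1, ((X q).2.1, (X q).2.2))).
  by apply: funext => q; case: (X q) => ? [].
rewrite /xc /qc /vc DX /= DX2 /= !derive_mx //.
by split=> *; rewrite mxE // (ord1 0).
Qed.

Definition contact_form (p w : J) (i : 'I_n) : R :=
  qc w i - \sum_(b < k) vc p i b * xc w b.

Lemma contact_form_e_q p i j : contact_form p (e_q R k i) j = (i == j)%:R.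
Proof.
rewrite /contact_form /qc /xc /= mxE eqxx eq_sym big1 ?subr0 // => b _.
by rewrite mxE mulr0.
Qed.

Lemma sum_contact_form_e_q p i (F : 'I_n -> R) :
  \sum_(j < n) contact_form p (e_q R k i) j * F j = F i.
Proof.
under eq_bigr do rewrite contact_form_e_q.
rewrite (bigD1 i) //= eqxx mul1r big1 ?addr0 // => j ji.
by rewrite eq_sym (negbTE ji) mul0r.
Qed.

Lemma derive_contact_form u p w i :
  derivable (fun q => contact_form q w i) p u /\
  'D_u (fun q => contact_form q w i) p = - \sum_(b < k) vc u i b * xc w b.
Proof.
apply: derive_linear_increment => h; rewrite /contact_form /vc /=.
under eq_bigr do rewrite !mxE mulrDl.
rewrite big_split /=; under eq_bigr do rewrite -mulrA.
by rewrite -mulr_sumr -[h *: _]/(h * _); ring.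
Qed.

Lemma ThetaE (L : J -> R) a p w : differentiable L p ->
  Theta L a p w = L p * xc w a + \sum_(i < n) contact_form p w i * 'D_(e_v R i a) L p.
Proof.
move=> dL; rewrite /Theta /dF /dx /S deriveE // linear_sum; congr (_ + _).
by apply: eq_bigr => i _; rewrite linearZ deriveE.
Qed.

End J1_coordinates.

Section SOPDE.
Context {R : realType} {k n : nat} {D : set (J1 R k n)} {G : 'I_k -> J1 R k n -> J1 R k n}.
Hypotheses (D_open : open D) (G_SOPDE : is_SOPDE D G)
  (G_commute : forall a b p, D p -> lie_bracket (G a) (G b) p = 0).
Local Notation J := (J1 R k n).

Lemma SOPDE_xc a b p : D p -> xc (G a p) b = (b == a)%:R.
Proof. by move=> Dp; have [-> _] := G_SOPDE.2 a p Dp. Qed.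

Lemma SOPDE_qc a i p : D p -> qc (G a p) i = vc p i a.
Proof.
move=> Dp; have [_ /(_ i) /eqP] := G_SOPDE.2 a p Dp; rewrite subr_eq0 => /eqP ->.
under eq_bigr do rewrite SOPDE_xc //.
by rewrite (bigD1 a) //= eqxx mulr1 big1 ?addr0 // => b /negbTE ->; rewrite mulr0.
Qed.

Lemma derive_SOPDE_coord a u p : D p ->
  (forall b, xc ('D_u (G a) p) b = 0) /\ (forall i, qc ('D_u (G a) p) i = vc u i a).
Proof.
move=> Dp; have [sx [sq sv]] := G_SOPDE.1 a.
have smooth_derivable f : smooth_on D f -> derivable f p u.
  by move=> sf; apply: diff_derivable; exact: (sf [::] p Dp).
have [Dx Dq _] := derive_vf_coord (fun b => smooth_derivable _ (sx b))
  (fun i => smooth_derivable _ (sq i)) (fun i b => smooth_derivable _ (sv i b)).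
have nearD : \forall q \near p, D q by exact: open_nbhs_nbhs.
split=> [b|i].
- rewrite Dx (@near_eq_derive R J R _ (cst (b == a)%:R)) ?derive_cst //.
  by near=> q; rewrite SOPDE_xc //; near: q.
- rewrite Dq (@near_eq_derive R J R _ (fun q : J => vc q i a)) ?derive_vc //.
  by near=> q; rewrite SOPDE_qc //; near: q.
Unshelve. all: by end_near. Qed.

(* The q-component of [Gamma_a, Gamma_b] is Gamma^i_{ab} - Gamma^i_{ba}. *)
Lemma SOPDE_vc_sym i a b p : D p -> vc (G a p) i b = vc (G b p) i a.
Proof.
move=> Dp; move/eqP: (G_commute a b p Dp); rewrite /lie_bracket subr_eq0 => /eqP E.
by rewrite -(derive_SOPDE_coord b (G a p) p Dp).2 -(derive_SOPDE_coord a (G b p) p Dp).2 E.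
Qed.

Context {L : J -> R}.
Hypothesis L_smooth : smooth_on D L.

Lemma derive_Theta_SOPDE a p w : D p ->
  'D_(G a p) (fun x => Theta L a x w) p =
  'D_(G a p) L p * xc w a
  + \sum_(i < n) (contact_form p w i * 'D_(G a p) (fun x => 'D_(e_v R i a) L x) p
                  - (\sum_(b < k) vc (G a p) i b * xc w b) * 'D_(e_v R i a) L p).
Proof.
move=> Dp; set u := G a p.
pose theta i x := contact_form x w i; pose Lv i x := 'D_(e_v R i a) L x.
have nearD : \forall q \near p, D q by exact: open_nbhs_nbhs.
rewrite (@near_eq_derive R J R _ (L * cst (xc w a) + \sum_(i < n) (theta i * Lv i))); last first.
  by near=> x; rewrite ThetaE ?fct_sumE //; apply: (L_smooth [::]); near: x.
have dL : derivable L p u by apply: diff_derivable; exact: (L_smooth [::]).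
have dLv i : derivable (Lv i) p u by apply: diff_derivable; exact: (L_smooth [:: e_v R i a]).
have dtheta i := (derive_contact_form u p w i).1.
have dLc : derivable (L * cst (xc w a)) p u := derivableM dL (derivable_cst _ _ _).
have dthetaLv i : derivable (theta i * Lv i) p u := derivableM (dtheta i) (dLv i).
rewrite (deriveD dLc (derivable_sum dthetaLv)) (derive_sum dthetaLv).
rewrite (deriveM dL (derivable_cst _ _ _)) derive_cst scaler0 add0r /= mulrC.
congr (_ + _); apply: eq_bigr => i _.
rewrite (deriveM (dtheta i) (dLv i)) /theta /Lv (derive_contact_form u p w i).2 /=.
by rewrite -[_ *: 'D_u _ p]/(_ * _) -[_ *: - _]/(_ * _); ring.
Unshelve. all: by end_near. Qed.

Lemma lie_Theta_SOPDE a p w : D p ->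
  lie1 (G a) (Theta L a) p w =
  'D_(G a p) L p * xc w a
  + \sum_(i < n) (contact_form p w i * vfapp (G a) (fun x => 'D_(e_v R i a) L x) p
                  + (vc w i a - \sum_(b < k) vc (G a p) i b * xc w b) * 'D_(e_v R i a) L p).
Proof.
move=> Dp; have [DGx DGq] := derive_SOPDE_coord a w p Dp.
rewrite /lie1 derive_Theta_SOPDE // ThetaE; last exact: (L_smooth [::]).
have -> : xc ('D_w (G a) p) a = 0 by exact: DGx.
rewrite mulr0 add0r -addrA -big_split /=; congr (_ + _); apply: eq_bigr => i _.
have -> : contact_form p ('D_w (G a) p) i = vc w i a.
  by rewrite /contact_form DGq big1 ?subr0 // => b _; rewrite DGx mulr0.
by rewrite /vfapp; ring.
Qed.

Lemma sum_derive_SOPDE_sub p w : D p ->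
  \sum_(a < k) 'D_(G a p) L p * xc w a - 'D_w L p =
  - \sum_(i < n) contact_form p w i * 'D_(e_q R k i) L p
  - \sum_(a < k) \sum_(i < n)
      (vc w i a - \sum_(b < k) vc (G a p) i b * xc w b) * 'D_(e_v R i a) L p.
Proof.
move=> Dp; have dL : differentiable L p by exact: (L_smooth [::]).
have GL a : 'D_(G a p) L p = 'D_(e_x R n a) L p
    + \sum_(i < n) vc p i a * 'D_(e_q R k i) L p
    + \sum_(i < n) \sum_(b < k) vc (G a p) i b * 'D_(e_v R i b) L p.
  rewrite derive_coordE //; congr (_ + _ + _).
  - rewrite (bigD1 a) //= SOPDE_xc // eqxx mul1r big1 ?addr0 // => b /negbTE ba.
    by rewrite SOPDE_xc // ba mul0r.
  - by apply: eq_bigr => i _; rewrite SOPDE_qc.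
rewrite (derive_coordE _ _ w dL); under eq_bigr do rewrite GL.
exact: (sum_derive_SOPDE_sub_coord (fun a => 'D_(e_x R n a) L p) (fun i => 'D_(e_q R k i) L p)
  (fun i a => 'D_(e_v R i a) L p) (vc p) (vc w) (fun i a b => vc (G a p) i b) (xc w) (qc w)
  (fun i a b => SOPDE_vc_sym i a b p Dp)).
Qed.

Lemma sum_lie_Theta_SOPDE p w : D p ->
  \sum_(a < k) lie1 (G a) (Theta L a) p w = dF L p w
  + \sum_(i < n) contact_form p w i *
    (\sum_(a < k) vfapp (G a) (fun x => 'D_(e_v R i a) L x) p - 'D_(e_q R k i) L p).
Proof.
move=> Dp; under eq_bigr do rewrite lie_Theta_SOPDE //.
exact: (sum_lie_Theta_coord (fun a => 'D_(G a p) L p * xc w a) (dF L p w)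
  (fun i => contact_form p w i) (fun i => 'D_(e_q R k i) L p)
  (fun i a => vfapp (G a) (fun x => 'D_(e_v R i a) L x) p)
  (fun i a => vc w i a - \sum_(b < k) vc (G a p) i b * xc w b)
  (fun i a => 'D_(e_v R i a) L p) (sum_derive_SOPDE_sub p w Dp)).
Qed.

End SOPDE.

Theorem mainTheorem3 (R : realType) (k n : nat) (D : set (J1 R k n))
  (L : J1 R k n -> R) (G : 'I_k -> J1 R k n -> J1 R k n) :
  open D -> smooth_on D L -> integrable_SOPDE D G ->
  (forall p, D p -> forall w : J1 R k n,
     \sum_(a < k) lie1 (G a) (Theta L a) p w = dF L p w)
  <->
  (forall p, D p -> forall i : 'I_n,
     \sum_(a < k) vfapp (G a) (fun p' => 'D_(@e_v R k n i a) L p') p - 'D_(@e_q R k n i) L p = 0).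
Proof.
move=> D_open L_smooth [G_SOPDE [_ G_commute]].
have key := sum_lie_Theta_SOPDE D_open G_SOPDE G_commute L_smooth.
split=> [EL p Dp i | EL p Dp w].
- have := etrans (esym (EL p Dp (e_q R k i))) (key p (e_q R k i) Dp).
  by rewrite sum_contact_form_e_q -{1}[dF _ _ _]addr0 => /addrI <-.
- by rewrite (key p w Dp) big1 ?addr0 // => i _; rewrite EL // mulr0.
Qed.
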